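(* Let $E$ be a real topological vector space, $\Omega$ a nonempty open subset of $E$, and $f_0,\dots,f_m:\Omega\to\mathbb{R}$. Let $\hat{x}$ be a solution of the problem $(\mathcal{P}_1)$: maximize $f_0(x)$ subject to $x\in\Omega$ and $f_i(x)\ge0$ for all $i\in\{1,\dots,m\}$. Assume that $f_j$ is lower semicontinuous at $\hat{x}$ for every $j\in\{1,\dots,m\}$ with $f_j(\hat{x})>0$, that each $f_i$ ($0\le i\le m$) is $D^-_M$-differentiable at $\hat{x}$, and that, after reindexing, $\{i\in\{1,\dots,m\}:f_i(\hat{x})=0\}=\{1,\dots,l\}$ with $l\ge1$. For $p\in\{0,\dots,l\}$ let $A_p=\{u\in E: D^-_Mf_i(\hat{x})(u)>0\ \text{for all } i\in\{p,\dots,l\}\}$. If $A_l\neq\emptyset$, then $A_0=\emptyset$; equivalently, $k:=\min\{i\in\{0,\dots,l\}:A_i\neq\emptyset\}$ satisfies $k\ge1$.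
   Context: $D^-f(x)(u):=\liminf_{t\to0^+}\frac{f(x+tu)-f(x)}{t}$ (with $D^-f(x)(0)=0$); $D^-_Mf(x)(u):=\inf_{w\in E}\{D^-f(x)(u+w)-D^-f(x)(w)\}$; $f$ is $D^-_M$-differentiable at $x$ if both are finite for every $u\in E$. *)

From HB Require Import structures.
From mathcomp Require Import all_boot all_order all_algebra.
From mathcomp Require Import all_classical all_reals all_analysis.
Set Implicit Arguments. Unset Strict Implicit. Unset Printing Implicit Defensive.
Import Order.TTheory GRing.Theory Num.Theory.
Import numFieldNormedType.Exports.
Local Open Scope classical_set_scope.
Local Open Scope ring_scope.

Section Defs.
Context {R : realType} {E : topologicalLmodType R}.

Definition lowerDini (f : E -> R) (x u : E) : \bar R :=
  if u == 0 then 0%E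
  else limf_einf (fun t : R => ((f (x + t *: u) - f x) / t)%:E) (0^'+).

Definition lowerDiniM (f : E -> R) (x u : E) : \bar R :=
  ereal_inf [set (lowerDini f x (u + w)%R - lowerDini f x w)%E | w in [set: E]].

Definition DM_differentiable (f : E -> R) (x : E) : Prop :=
  forall u : E, lowerDini f x u \is a fin_num /\ lowerDiniM f x u \is a fin_num.

Definition lsc_at (f : E -> R) (x : E) : Prop :=
  forall a : R, a < f x -> \forall y \near x, a < f y.

Definition Aset (f : nat -> E -> R) (xh : E) (l p : nat) : set E :=
  [set u | forall i, (p <= i <= l)%N -> (0 < lowerDiniM (f i) xh u)%E].

End Defs.

From HB Require Import structures.
From mathcomp Require Import all_boot all_order all_algebra.
From mathcomp Require Import all_classical all_reals all_analysis.
Import Order.TTheory GRing.Theory Num.Theory.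
Import numFieldNormedType.Exports.
Local Open Scope classical_set_scope.
Local Open Scope ring_scope.

(** Taking [w = 0] in the infimum defining [D^-_M] gives
    [D^-_M f_i(x)(u) <= D^- f_i(x)(u)], so a direction [u] in [A_0] is a strict
    ascent direction of [f_0] and of every active constraint: for small [t > 0]
    these functions increase strictly along [x + t u].  The inactive constraints
    stay positive there by lower semicontinuity, and [x + t u] stays in the open
    set [Omega].  Hence [x + t u] is feasible and beats [x], a contradiction. *)

Lemma near_forall_leq (T : Type) (F : set_system T) (n : nat)
    (P : nat -> T -> Prop) : Filter F ->
  (forall i, (i <= n)%N -> \forall t \near F, P i t) ->
  \forall t \near F, forall i, (i <= n)%N -> P i t.
Proof.
move=> FF nearP.
have := @filter_forall T 'I_n.+1 (fun i => P i) F FF (fun i => nearP i (ltn_ord i)).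
by apply: filterS => t Pt i ni; exact: (Pt (Ordinal (ni : (i < n.+1)%N))).
Qed.

Lemma limf_einf_gt_near (R : realType) (F : set_system R) (g : R -> R) (a : R) :
  Filter F ->
  (a%:E < limf_einf (fun t => (g t)%:E) F)%E -> \forall t \near F, a < g t.
Proof.
move=> FF; rewrite limf_einfE => /ereal_sup_gt [_ [V FV <-] a_lt_infV].
apply: filterS FV => t Vt; rewrite -lte_fin.
by apply: (lt_le_trans a_lt_infV); apply: ereal_inf_lbound; exists t.
Qed.

Section ray.
Context {R : realType} {E : topologicalLmodType R}.

Lemma cvg_ray (x u : E) : (fun t : R => x + t *: u) @ 0^'+ --> x.
Proof.
apply: cvg_at_right_filter.
suff : x + t *: u @[t --> (0 : R)] --> x + 0 *: u by rewrite scale0r addr0.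
apply: (@continuous2_cvg _ E E E _ _ (fun=> x) (fun t : R => t *: u) +%R).
- exact: (add_continuous (x, 0 *: u)).
- exact: cvg_cst.
apply: (@continuous2_cvg _ R^o E E _ _ id (fun=> u) *:%R).
- exact: (scale_continuous (0 : R^o, u)).
- exact: cvg_id.
- exact: cvg_cst.
Qed.

Lemma near_ray (x u : E) {P : set E} :
  (\forall y \near x, P y) -> \forall t \near 0^'+, P (x + t *: u).
Proof. exact: cvg_ray. Qed.

End ray.

Section lower_Dini.
Context {R : realType} {E : topologicalLmodType R}.
Implicit Types (f : E -> R) (x u : E).

Lemma lowerDini0 f x : lowerDini f x 0 = 0%E.
Proof. by rewrite /lowerDini eqxx. Qed.

Lemma lowerDiniM_le_lowerDini f x u : (lowerDiniM f x u <= lowerDini f x u)%E.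
Proof.
apply: ereal_inf_lbound; exists 0 => //.
by rewrite addr0 lowerDini0 sube0.
Qed.

Lemma lowerDini_gt0_near_increase f x u : (0 < lowerDini f x u)%E ->
  \forall t \near 0^'+, f x < f (x + t *: u).
Proof.
have [->|u_neq0] := eqVneq u 0; first by rewrite lowerDini0 ltxx.
rewrite /lowerDini (negbTE u_neq0) => /limf_einf_gt_near.
apply: filter_app; near=> t => /=.
have t_gt0 : 0 < t by near: t; exact: nbhs_right_gt.
by rewrite pmulr_lgt0 ?invr_gt0 // subr_gt0.
Unshelve. all: by end_near.
Qed.

Lemma lowerDiniM_gt0_near_increase f x u : (0 < lowerDiniM f x u)%E ->
  \forall t \near 0^'+, f x < f (x + t *: u).
Proof.
move=> /lt_le_trans/(_ (lowerDiniM_le_lowerDini f x u)).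
exact: lowerDini_gt0_near_increase.
Qed.

End lower_Dini.

Theorem lemma3p7 (R : realType) (E : topologicalLmodType R) (Omega : set E)
  (m l : nat) (f : nat -> E -> R) (xh : E) :
  open Omega -> Omega !=set0 ->
  (* xh solves (P1): maximize f_0 on Omega subject to f_i >= 0, 1 <= i <= m *)
  Omega xh -> (forall i, (1 <= i <= m)%N -> 0 <= f i xh) ->
  (forall x, Omega x -> (forall i, (1 <= i <= m)%N -> 0 <= f i x) ->
     f 0%N x <= f 0%N xh) ->
  (* lower semicontinuity of the inactive constraints *)
  (forall j, (1 <= j <= m)%N -> 0 < f j xh -> lsc_at (f j) xh) ->
  (* D^-_M-differentiability of f_0, ..., f_m at xh *)
  (forall i, (i <= m)%N -> DM_differentiable (f i) xh) ->
  (* active constraints are exactly 1, ..., l with l >= 1 *)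
  (1 <= l <= m)%N ->
  (forall i, (1 <= i <= m)%N -> (f i xh = 0 <-> (i <= l)%N)) ->
  Aset f xh l l !=set0 -> Aset f xh l 0 = set0.
Proof.
move=> open_Omega _ Omega_xh fxh_ge0 xh_max lsc _ /andP[l_ge1 l_le_m] active _.
rewrite -subset0 => u A0u.
have ascent i : (i <= l)%N -> \forall t \near 0^'+, f i xh < f i (xh + t *: u).
  by move=> il; apply: lowerDiniM_gt0_near_increase; apply: A0u.
have feasible i : (i <= m)%N ->
    \forall t \near 0^'+, (1 <= i)%N -> 0 <= f i (xh + t *: u).
  move=> im; have [il|li] := leqP i l.
    apply: filterS (ascent i il) => t fi_lt i1.
    by rewrite -((active i _).2 il) ?i1 // ltW.
  have i_in : (1 <= i <= m)%N by rewrite (leq_trans l_ge1 (ltnW li)).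
  have fxh_gt0 : 0 < f i xh.
    by rewrite lt_def fxh_ge0 // andbT; apply/eqP => /(active i i_in); rewrite leqNgt li.
  by apply: filterS (near_ray xh u (lsc i i_in fxh_gt0 0 fxh_gt0)) => t /ltW.
have [t [] Omega_t feasible_t ascent_t] : exists t, [/\ Omega (xh + t *: u),
    forall i, (i <= m)%N -> (1 <= i)%N -> 0 <= f i (xh + t *: u) &
    f 0%N xh < f 0%N (xh + t *: u)].
  apply: (@filter_ex _ 0^'+); near=> t; split; near: t.
  - by apply: near_ray; exact: open_nbhs_nbhs.
  - exact: near_forall_leq.
  - exact: ascent.
have feasible_all i : (1 <= i <= m)%N -> 0 <= f i (xh + t *: u).
  by case/andP=> i1 im; exact: feasible_t.
by have := xh_max _ Omega_t feasible_all; rewrite leNgt ascent_t.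
Unshelve. all: by end_near.
Qed.
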